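(* For any $\delta>0$ there exists $c=c(\delta)>0$ such that the following holds. For any $\varepsilon\in(0,c)$, any simple graph $G=(V,E)$ on $n\ge\varepsilon^{-2}$ vertices with minimal degree at least $\delta n$, any $U\subset V$ with $|U|\ge\varepsilon\sqrt n$ and any vertex $v$ of $G$, \[ \Pr_v\left(X\left[0,2\left(t^G_{\mathrm{mix}}(\varepsilon/2)+\lfloor\sqrt n\rfloor\right)\right]\cap U=\varnothing\right)\le 1-\frac{\varepsilon\delta}{4}, \] where $X$ is the (non-lazy) simple random walk on $G$ started at $v$.
   Context: $t^G_{\mathrm{mix}}(\varepsilon)=\max_v\min\{t\ge0:\|\mathbf p^t(v,\cdot)-\pi\|_{\mathrm{TV}}<\varepsilon\}$ is defined for the lazy random walk on $G$ (stay put with probability $1/2$, otherwise move to a uniform neighbour), with $\pi(v)=\deg(v)/2|E|$ and total variation distance $\frac12\sum_v|\mu(v)-\nu(v)|$. For $a,b\ge0$, $X[a,b]$ denotes the set $\{X_i: i\in[\lceil a\rceil,\lfloor b\rfloor]\cap\mathbb N\}$. *)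

From HB Require Import structures.
From mathcomp Require Import all_boot all_order all_algebra.
From mathcomp Require Import reals.
Set Implicit Arguments. Unset Strict Implicit. Unset Printing Implicit Defensive.
Import Order.TTheory GRing.Theory Num.Theory.
Local Open Scope ring_scope.

Section Walks.
Variables (R : realType) (T : finType) (e : rel T).

Definition simple_graph : Prop := symmetric e /\ irreflexive e.

Definition deg (x : T) : nat := #|[set y | e x y]|.

Definition srw (x y : T) : R := (e x y)%:R / (deg x)%:R.

Definition lazy_srw (x y : T) : R := (x == y)%:R / 2 + srw x y / 2.

Fixpoint lazy_dist (t : nat) (v y : T) : R :=
  match t with
  | 0 => (v == y)%:R
  | t'.+1 => \sum_(x : T) lazy_dist t' v x * lazy_srw x y
  end.

Definition nedges : nat := #|[set p : T * T | e p.1 p.2]| %/ 2.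

Definition stat (v : T) : R := (deg v)%:R / (2 * (nedges)%:R).

Definition tv_to_stat (t : nat) (v : T) : R :=
  2^-1 * \sum_(y : T) `|lazy_dist t v y - stat y|.

(* t = t_mix(eps) = max_v min { s : ||p^s(v,.) - pi||_TV < eps }:
   every vertex v has its min time <= t, and some vertex has min time >= t.
   (If some min is not attained, i.e. t_mix = infinity, no t satisfies it.) *)
Definition is_tmix (eps : R) (t : nat) : Prop :=
  (forall v : T, exists2 s : nat, (s <= t)%N & tv_to_stat s v < eps) /\
  (exists v : T, forall s : nat, (s < t)%N -> eps <= tv_to_stat s v).

(* Pr_v( X[0,N] \cap U = empty ) for the simple random walk X started at v,
   computed on the path space of walks X_0 ... X_N. *)
Definition srw_avoid_prob (U : {set T}) (v : T) (N : nat) : R :=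
  \sum_(p : (N.+1).-tuple T |
        (tnth p ord0 == v) && [forall i, tnth p i \notin U])
    \prod_(i < N) srw (tnth p (widen_ord (leqnSn N) i)) (tnth p (lift ord0 i)).

End Walks.

Definition sqrtn (n : nat) : nat := \max_(k < n.+1 | (k * k <= n)%N) k.

(* Let F y be the probability that one step from y lands in U, and Z the expected
   number of visits to U at times 1..N, i.e. the sum of (P^m F)(v) over m < N = W + t.
   Since t lazy steps perform at most t real steps, the sum of P^j (L^t F) over j < W
   is at most Z; by the mixing assumption each L^t F is within eps * max F of pi(F),
   so Z >= W (pi(F) - eps max F).  Minimal degree delta n gives pi(F) = pi(U) >=
   delta |U| / n and max F <= |U| / (delta n).  Conversely Z <= Pr(hit U) (1 + N max F),
   since after the first hit at most N max F further visits are expected.  With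
   W = t + 2 floor(sqrt n) we get N = 2 (t + floor(sqrt n)) and |U| N / n >= eps, and the
   two bounds on Z give Pr(hit U) >= eps delta / 4. *)

From HB Require Import structures.
From mathcomp Require Import all_boot all_order all_algebra.
From mathcomp Require Import reals ring lra zify.
Set Implicit Arguments. Unset Strict Implicit. Unset Printing Implicit Defensive.
Import Order.TTheory GRing.Theory Num.Theory.
Local Open Scope ring_scope.

Lemma sum_indicator (R : nzSemiRingType) (T : finType) (x : T) (f : T -> R) :
  \sum_y (x == y)%:R * f y = f x.
Proof.
rewrite (bigD1 x) //= eqxx mul1r big1 ?addr0 // => y /negbTE.
by rewrite eq_sym => ->; rewrite mul0r.
Qed.

Lemma ler_sum_avg_succ (R : realFieldType) (a : nat -> R) (K : nat) :
  (forall m, 0 <= a m) ->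
  \sum_(m < K) 2^-1 * (a m + a m.+1) <= \sum_(m < K.+1) a m.
Proof.
move=> a_ge0.
have head : \sum_(m < K) a m <= \sum_(m < K.+1) a m.
  by rewrite big_ord_recr lerDl.
have tail : \sum_(m < K) a m.+1 <= \sum_(m < K.+1) a m.
  by rewrite big_ord_recl lerDr.
rewrite -mulr_sumr big_split /=; lra.
Qed.

Lemma ler_sum_mul_l1 (R : realDomainType) (T : finType) (mu nu f : T -> R) (M : R) :
  (forall y, 0 <= f y <= M) ->
  \sum_y nu y * f y - (\sum_y `|mu y - nu y|) * M <= \sum_y mu y * f y.
Proof.
move=> f_bnd.
have diff : \sum_y mu y * f y - \sum_y nu y * f y = \sum_y (mu y - nu y) * f y.
  by rewrite -sumrB; apply: eq_bigr => y _; rewrite mulrBl.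
have : \sum_y - ((mu y - nu y) * f y) <= (\sum_y `|mu y - nu y|) * M.
  rewrite mulr_suml; apply: ler_sum => y _; have /andP[f0 fM] := f_bnd y.
  rewrite -mulrN; apply: le_trans (ler_norm _) _.
  by rewrite normrM normrN (ger0_norm f0) ler_wpM2l.
rewrite sumrN; lra.
Qed.

Section Kernel.
Variables (R : realFieldType) (T : finType) (P : T -> T -> R).
Hypothesis P_ge0 : forall x y, 0 <= P x y.
Hypothesis P_sum1 : forall x, \sum_y P x y = 1.

Definition kact (f : T -> R) (x : T) : R := \sum_y P x y * f y.

Definition kpow (k : nat) : (T -> R) -> T -> R := iter k kact.

Lemma eq_kact f g : f =1 g -> kact f =1 kact g.
Proof. by move=> fg x; apply: eq_bigr => y _; rewrite fg. Qed.

Lemma kactD f g x : kact (fun y => f y + g y) x = kact f x + kact g x.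
Proof. by rewrite -big_split; apply: eq_bigr => y _; rewrite mulrDr. Qed.

Lemma kactZ a f x : kact (fun y => a * f y) x = a * kact f x.
Proof. by rewrite mulr_sumr; apply: eq_bigr => y _; rewrite mulrCA. Qed.

Lemma kact_sum n (F : 'I_n -> T -> R) x :
  kact (fun y => \sum_i F i y) x = \sum_i kact (F i) x.
Proof.
rewrite /kact exchange_big /=; apply: eq_bigr => y _.
by rewrite mulr_sumr.
Qed.

Lemma kact_ge a f x : (forall y, a <= f y) -> a <= kact f x.
Proof.
move=> af; rewrite -[a]mul1r -(P_sum1 x) mulr_suml.
by apply: ler_sum => y _; rewrite ler_wpM2l.
Qed.

Lemma kact_le b f x : (forall y, f y <= b) -> kact f x <= b.
Proof.
move=> fb; rewrite -[b]mul1r -(P_sum1 x) mulr_suml.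
by apply: ler_sum => y _; rewrite ler_wpM2l.
Qed.

Lemma kpowD k f g x : kpow k (fun y => f y + g y) x = kpow k f x + kpow k g x.
Proof.
elim: k x => [|k IH] x //=.
by rewrite -kactD; apply: eq_kact => y; exact: IH.
Qed.

Lemma kpowZ k a f x : kpow k (fun y => a * f y) x = a * kpow k f x.
Proof.
elim: k x => [|k IH] x //=.
by rewrite -kactZ; apply: eq_kact => y; exact: IH.
Qed.

Lemma kpow_ge k a f x : (forall y, a <= f y) -> a <= kpow k f x.
Proof. by elim: k x => [|k IH] x af //=; apply: kact_ge => y; exact: IH. Qed.

Lemma kpow_le k b f x : (forall y, f y <= b) -> kpow k f x <= b.
Proof. by elim: k x => [|k IH] x fb //=; apply: kact_le => y; exact: IH. Qed.

Lemma ler_kact f g x : (forall y, f y <= g y) -> kact f x <= kact g x.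
Proof. by move=> fg; apply: ler_sum => y _; rewrite ler_wpM2l. Qed.

Lemma kact_const_sub c h x : kact (fun y => c - h y) x = c - kact h x.
Proof.
rewrite /kact -[c in RHS]mul1r -(P_sum1 x) mulr_suml -sumrB.
by apply: eq_bigr => y _; rewrite mulrBr.
Qed.

Lemma l1_kernel_step (mu pi : T -> R) :
  (forall y, \sum_x pi x * P x y = pi y) ->
  \sum_y `|\sum_x mu x * P x y - pi y| <= \sum_x `|mu x - pi x|.
Proof.
move=> pi_stat.
have step y : \sum_x mu x * P x y - pi y = \sum_x (mu x - pi x) * P x y.
  by rewrite -{1}pi_stat -sumrB; apply: eq_bigr => x _; rewrite mulrBl.
under eq_bigr do rewrite step.
apply: le_trans (_ : \sum_y \sum_x `|mu x - pi x| * P x y <= _).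
  apply: ler_sum => y _; apply: le_trans (ler_norm_sum _ _ _) _.
  by apply: ler_sum => x _; rewrite normrM (ger0_norm (P_ge0 _ _)).
by rewrite exchange_big /=; apply: ler_sum => x _; rewrite -mulr_sumr P_sum1 mulr1.
Qed.

Lemma stationary_kact (pi f : T -> R) :
  (forall y, \sum_x pi x * P x y = pi y) ->
  \sum_x pi x * kact f x = \sum_y pi y * f y.
Proof.
move=> pi_stat; rewrite /kact; under eq_bigr do rewrite mulr_sumr.
rewrite exchange_big /=; apply: eq_bigr => y _.
by rewrite -pi_stat mulr_suml; apply: eq_bigr => x _; rewrite mulrA.
Qed.

Definition lazy_kact (f : T -> R) (y : T) : R := 2^-1 * (f y + kact f y).

Lemma kpow_lazy m f x : kpow m (lazy_kact f) x = 2^-1 * (kpow m f x + kpow m.+1 f x).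
Proof. by rewrite kpowZ kpowD /kpow iterSr. Qed.

Definition visits (N : nat) (f : T -> R) (x : T) : R := \sum_(m < N) kpow m f x.

(* Each lazy step either stays or moves once, so t lazy steps delay the walk by at most t. *)
Lemma visits_lazy_delay t W f x : (forall y, 0 <= f y) ->
  \sum_(j < W) kpow j (iter t lazy_kact f) x <= visits (W + t) f x.
Proof.
elim: t W f => [|t IH] W f f_ge0; first by rewrite addn0.
have lazy_ge0 y : 0 <= lazy_kact f y.
  by rewrite mulr_ge0 ?invr_ge0 ?ler0n ?addr_ge0 ?f_ge0 //; apply: kact_ge.
rewrite iterSr addnS; apply: le_trans (IH W _ lazy_ge0) _.
rewrite /visits; under eq_bigr do rewrite kpow_lazy.
by apply: (@ler_sum_avg_succ R (fun m => kpow m f x)) => m; apply: kpow_ge.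
Qed.

Lemma visitsS N g x : visits N.+1 g x = g x + kact (visits N g) x.
Proof. by rewrite /visits big_ord_recl kact_sum. Qed.

Lemma visits_le N b g x : (forall y, g y <= b) -> visits N g x <= N%:R * b.
Proof.
move=> gb; rewrite /visits mulr_natl -[in leRHS](card_ord N) -sumr_const.
by apply: ler_sum => m _; apply: kpow_le.
Qed.

Section Avoid.
Variable U : {set T}.

Fixpoint avoid (k : nat) (w : T) : R :=
  if k is k'.+1 then kact (fun y => (y \notin U)%:R * avoid k' y) w else 1.

Lemma avoid_ge0_le1 k w : 0 <= avoid k w <= 1.
Proof.
elim: k w => [|k IH] w /=; first by rewrite ler01 lexx.
apply/andP; split.
  by apply: kact_ge => y; case/andP: (IH y) => h _; rewrite mulr_ge0 ?ler0n.
apply: kact_le => y; case/andP: (IH y) => _ h.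
by case: (y \notin U); rewrite ?mul1r ?mul0r ?ler01.
Qed.

Local Notation inU := (fun y => (y \in U)%:R).

(* Only walks that hit U visit it, and after the first hit at most k further visits are expected. *)
Lemma visits_hit_le rho k w : (forall y, kact inU y <= rho) -> 0 <= rho ->
  visits k (kact inU) w <= (1 - avoid k w) * (1 + k%:R * rho).
Proof.
move=> hit_le rho_ge0; elim: k w => [|k IH] w.
  by rewrite /visits big_ord0 subrr mul0r.
rewrite visitsS -kactD /= -kact_const_sub mulrC -kactZ; apply: ler_kact => y.
rewrite mulrC.
have k_le : 1 + k%:R * rho <= 1 + k.+1%:R * rho by rewrite lerD2l ler_wpM2r // ler_nat.
have [avoid_ge0 avoid_le1] := andP (avoid_ge0_le1 k y).
case: (boolP (y \in U)) => /= yU.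
  by rewrite mul0r subr0 mul1r; apply: le_trans k_le; rewrite lerD2l visits_le.
rewrite add0r mul1r; apply: le_trans (IH y) _.
by rewrite ler_wpM2l // subr_ge0.
Qed.

End Avoid.

End Kernel.

Section SimpleRandomWalk.
Variables (R : realType) (T : finType) (e : rel T).
Hypothesis e_sym : symmetric e.
Hypothesis deg_gt0 : forall x, (0 < deg e x)%N.

Local Notation P := (srw R e).
Local Notation L := (lazy_srw R e).
Local Notation pi := (stat R e).

Lemma sum_adj x : \sum_y ((e x y)%:R : R) = (deg e x)%:R.
Proof.
rewrite /deg cardsE -sum1_card natr_sum [RHS]big_mkcond /=.
by apply: eq_bigr => y _; rewrite unfold_in; case: (e x y).
Qed.

Lemma srw_ge0 x y : 0 <= P x y.
Proof. by rewrite /srw divr_ge0 ?ler0n. Qed.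

Lemma srw_sum1 x : \sum_y P x y = 1.
Proof. by rewrite /srw -mulr_suml sum_adj mulfV // pnatr_eq0 -lt0n deg_gt0. Qed.

Lemma stat_srw y : \sum_x pi x * P x y = pi y.
Proof.
rewrite /stat -sum_adj mulr_suml; apply: eq_bigr => x _.
by rewrite /srw e_sym mulrC mulrA mulfVK // pnatr_eq0 -lt0n deg_gt0.
Qed.

Lemma lazy_srw_ge0 x y : 0 <= L x y.
Proof. by rewrite /lazy_srw addr_ge0 ?divr_ge0 ?ler0n ?srw_ge0. Qed.

Lemma kact_lazy_srw f x : kact L f x = lazy_kact P f x.
Proof.
rewrite /lazy_kact -[f x](sum_indicator x) mulrDr !mulr_sumr -big_split /=.
by apply: eq_bigr => y _; rewrite /lazy_srw; ring.
Qed.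

Lemma lazy_srw_sum1 x : \sum_y L x y = 1.
Proof.
transitivity (2^-1 * (\sum_y (x == y)%:R * 1 + \sum_y P x y)).
  by rewrite mulrDr !mulr_sumr -big_split /=; apply: eq_bigr => y _; rewrite /lazy_srw; ring.
rewrite sum_indicator srw_sum1; lra.
Qed.

Lemma stat_lazy_srw y : \sum_x pi x * L x y = pi y.
Proof.
transitivity (2^-1 * (\sum_x pi x * (x == y)%:R + \sum_x pi x * P x y)).
  by rewrite mulrDr !mulr_sumr -big_split /=; apply: eq_bigr => x _; rewrite /lazy_srw; ring.
rewrite stat_srw.
under eq_bigr do rewrite mulrC eq_sym; rewrite sum_indicator; lra.
Qed.

Lemma lazy_dist_kact t f x :
  \sum_y lazy_dist R e t x y * f y = iter t (lazy_kact P) f x.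
Proof.
elim: t f => [|t IH] f; first exact: sum_indicator.
transitivity (\sum_z lazy_dist R e t x z * kact L f z).
  rewrite /=; under eq_bigr do rewrite mulr_suml.
  rewrite exchange_big; apply: eq_bigr => z _.
  by rewrite /kact mulr_sumr; apply: eq_bigr => y _; rewrite mulrA.
by under eq_bigr do rewrite kact_lazy_srw; rewrite IH iterSr.
Qed.

Lemma tv_to_stat_le s s' w : (s <= s')%N -> tv_to_stat R e s' w <= tv_to_stat R e s w.
Proof.
move=> /subnK <-; elim: (s' - s)%N => [|d IH] //.
apply: le_trans IH; rewrite addSn /tv_to_stat ler_wpM2l ?invr_ge0 ?ler0n //.
exact: (l1_kernel_step lazy_srw_ge0 lazy_srw_sum1 _ stat_lazy_srw).
Qed.

Lemma visits_lazy_ge a M t W f v :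
  (forall x, \sum_y `|lazy_dist R e t x y - pi y| <= a) ->
  (forall y, 0 <= f y <= M) ->
  W%:R * (\sum_y pi y * f y - a * M) <= visits P (W + t) f v.
Proof.
move=> mix f_bnd.
have M_ge0 : 0 <= M by case/andP: (f_bnd v); apply: le_trans.
have lazy_ge x : \sum_y pi y * f y - a * M <= iter t (lazy_kact P) f x.
  rewrite -lazy_dist_kact; apply: le_trans (ler_sum_mul_l1 _ _ f_bnd).
  by rewrite lerB // ler_wpM2r.
have f_ge0 y : 0 <= f y by case/andP: (f_bnd y).
apply: le_trans (visits_lazy_delay srw_ge0 srw_sum1 t W v f_ge0).
rewrite mulr_natl -[in leLHS](card_ord W) -sumr_const.
by apply: ler_sum => j _; apply: kpow_ge srw_ge0 srw_sum1 _ _ _ _ lazy_ge.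
Qed.

End SimpleRandomWalk.

Section Paths.
Variables (R : realType) (T : finType) (e : rel T) (U : {set T}).

Local Notation P := (srw R e).
Local Notation avoid_prob := (srw_avoid_prob R e U).

Lemma forall_notin_cons n (x : T) (p : n.-tuple T) :
  [forall i, tnth [tuple of x :: p] i \notin U] =
  (x \notin U) && [forall i, tnth p i \notin U].
Proof.
apply/forallP/andP => [h|[hx /forallP h] i].
  split; first by have := h ord0; rewrite tnth0.
  by apply/forallP => i; have := h (lift ord0 i); rewrite tnthS.
by case: (unliftP ord0 i) => [j ->|->]; rewrite ?tnthS ?tnth0.
Qed.

Lemma srw_avoid_prob_cons N v : avoid_prob v N = (v \notin U)%:R *
  \sum_(p : N.-tuple T | [forall i, tnth p i \notin U])
    \prod_(i < N) P (tnth [tuple of v :: p] (widen_ord (leqnSn N) i))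
                    (tnth [tuple of v :: p] (lift ord0 i)).
Proof.
rewrite /srw_avoid_prob (reindex_onto (fun p : N.-tuple T => [tuple of v :: p])
  (fun p => [tuple of behead p])) /=; last first.
  by move=> p /andP[/eqP h _]; rewrite [RHS]tuple_eta; apply: val_inj; rewrite /= -h.
have behead_cons (p : N.-tuple T) : ([tuple of behead [tuple of v :: p]] == p) = true.
  by apply/eqP/val_inj.
under eq_bigl do rewrite tnth0 eqxx forall_notin_cons behead_cons andbT /=.
by case: (v \notin U); rewrite ?mul1r // mul0r big_pred0.
Qed.

Lemma srw_avoid_prob0 v : avoid_prob v 0 = (v \notin U)%:R.
Proof.
rewrite srw_avoid_prob_cons (big_pred1 [tuple]) ?big_ord0 ?mulr1 // => p.
have -> : pred1 [tuple] p = true by apply/eqP; apply: tuple0.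
by apply/forallP => -[].
Qed.

Lemma srw_avoid_probS N v :
  avoid_prob v N.+1 = (v \notin U)%:R * \sum_y P v y * avoid_prob y N.
Proof.
rewrite srw_avoid_prob_cons; congr (_ * _).
under eq_bigr => p _.
  rewrite big_ord_recl (_ : tnth _ (widen_ord _ ord0) = v); last by rewrite (tnth_nth v).
  rewrite tnthS.
  under eq_bigr => i _.
    rewrite (_ : tnth [tuple of v :: p] (widen_ord (leqnSn N.+1) (lift ord0 i)) =
                 tnth p (widen_ord (leqnSn N) i)); last by rewrite !(tnth_nth v).
    rewrite tnthS.
  over.
over.
rewrite (partition_big (fun p : N.+1.-tuple T => tnth p ord0) xpredT) //=.
apply: eq_bigr => y _; rewrite /srw_avoid_prob mulr_sumr.
by apply: eq_big => [p|p /andP[_ /eqP ->]] //; rewrite andbC.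
Qed.

Lemma srw_avoid_probE N v : avoid_prob v N = (v \notin U)%:R * avoid P U N v.
Proof.
elim: N v => [|N IH] v; first by rewrite srw_avoid_prob0 mulr1.
rewrite srw_avoid_probS; congr (_ * _); apply: eq_bigr => y _.
by rewrite IH.
Qed.

End Paths.

Section MinDegree.
Variables (R : realType) (T : finType) (e : rel T) (delta : R).
Hypothesis e_sym : symmetric e.
Hypothesis e_irr : irreflexive e.
Hypothesis delta_gt0 : 0 < delta.
Hypothesis deg_ge : forall x, delta * #|T|%:R <= (deg e x)%:R.

Local Notation P := (srw R e).
Local Notation pi := (stat R e).
Local Notation n := #|T|.

Lemma card_gt0R (x : T) : 0 < n%:R :> R.
Proof. by rewrite ltr0n; apply/card_gt0P; exists x. Qed.

Lemma deg_gt0 x : (0 < deg e x)%N.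
Proof.
by rewrite -(ltr0n R); apply: lt_le_trans (deg_ge x); rewrite mulr_gt0 // card_gt0R.
Qed.

Lemma nedges_gt0 (x : T) : (0 < nedges e)%N.
Proof.
have /card_gt0P [y] := deg_gt0 x; rewrite inE => exy.
have xy_neq : (x, y) != (y, x).
  by apply/eqP => -[xy _]; move: exy; rewrite xy e_irr.
have : [set (x, y); (y, x)] \subset [set p : T * T | e p.1 p.2].
  by apply/subsetP => p; rewrite !inE => /orP[] /eqP -> /=; rewrite // e_sym.
by move/subset_leq_card; rewrite cards2 xy_neq /nedges; lia.
Qed.

Lemma nedges_le : (2 * nedges e <= n * n)%N.
Proof.
have : (#|[set p : T * T | e p.1 p.2]| <= n * n)%N by rewrite -card_prod max_card.
by rewrite /nedges; lia.
Qed.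

Lemma stat_ge x : delta / n%:R <= pi x.
Proof.
have n_gt0 := card_gt0R x.
have E_gt0 : 0 < 2 * (nedges e)%:R :> R by rewrite mulr_gt0 ?ltr0n ?nedges_gt0.
have E_le : 2 * (nedges e)%:R <= n%:R * n%:R :> R by rewrite -!natrM ler_nat nedges_le.
apply: le_trans (_ : (deg e x)%:R / (n%:R * n%:R) <= _).
  by rewrite ler_pdivlMr ?mulr_gt0 // mulrA mulfVK ?deg_ge // lt0r_neq0.
by rewrite ler_wpM2l ?ler0n // lef_pV2 ?posrE // mulr_gt0.
Qed.

Variable U : {set T}.
Local Notation inU := (fun y => (y \in U)%:R : R).
Local Notation u := (#|U|%:R / n%:R).

Lemma srw_into_le y : kact P inU y <= u / delta.
Proof.
have dn_gt0 : 0 < delta * n%:R by rewrite mulr_gt0 // card_gt0R.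
apply: le_trans (_ : \sum_(u in U) (deg e y)%:R^-1 <= _).
  rewrite /kact [leRHS]big_mkcond; apply: ler_sum => u _; rewrite /srw.
  by case: (u \in U); case: (e y u); rewrite ?mulr1 ?mulr0 ?mul1r ?mul0r ?invr_ge0 ?ler0n.
rewrite -mulrA -invfM [_ * delta]mulrC sumr_const -[_ *+ #|U|]mulr_natl.
rewrite ler_wpM2l ?ler0n // lef_pV2 ?posrE ?deg_ge //.
exact: lt_le_trans (deg_ge y).
Qed.

Lemma stat_into_ge : u * delta <= \sum_y pi y * kact P inU y.
Proof.
rewrite (stationary_kact _ (stat_srw R e_sym deg_gt0)) big_mkcond /=.
apply: le_trans (_ : \sum_(u in U) delta / n%:R <= _).
  by rewrite sumr_const -[delta / _ *+ _]mulr_natl mulrA mulrAC.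
rewrite [leLHS]big_mkcond; apply: ler_sum => u _.
by case: (u \in U); rewrite ?mulr1 ?mulr0 ?stat_ge.
Qed.

Lemma srw_hit_ge a t W v :
  (forall x, \sum_y `|lazy_dist R e t x y - pi y| <= a) ->
  W%:R * (u * delta - a * (u / delta)) <=
  (1 - avoid P U (W + t) v) * (1 + (W + t)%:R * (u / delta)).
Proof.
move=> mix.
have into_ge0 y : 0 <= kact P inU y.
  by apply: (kact_ge (srw_ge0 R e) (srw_sum1 R deg_gt0)) => u; rewrite ler0n.
have ud_ge0 : 0 <= u / delta := le_trans (into_ge0 v) (srw_into_le v).
apply: le_trans (_ : W%:R * (\sum_y pi y * kact P inU y - a * (u / delta)) <= _).
  by rewrite ler_wpM2l ?ler0n // lerD2r stat_into_ge.
apply: le_trans (visits_lazy_ge deg_gt0 W v mix _) _ => [y|].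
  by rewrite into_ge0 srw_into_le.
exact: (visits_hit_le (srw_ge0 R e) (srw_sum1 R deg_gt0) _ _ srw_into_le ud_ge0).
Qed.

End MinDegree.

Lemma sqrtn_gt0 n : (0 < n)%N -> (0 < sqrtn n)%N.
Proof.
move=> n_gt0; have := @leq_bigmax_cond _ (fun k : 'I_n.+1 => (k * k <= n)%N)
  (fun k => nat_of_ord k) (Ordinal (n_gt0 : 1 < n.+1)%N).
by rewrite /= mul1n => /(_ n_gt0).
Qed.

Lemma ltn_sqrtn n : (n < (sqrtn n).+1 * (sqrtn n).+1)%N.
Proof.
case: (leqP (sqrtn n).+1 n) => h; last by apply: leq_trans h _; rewrite leq_pmulr.
rewrite ltnNge; apply/negP => h2.
have := @leq_bigmax_cond _ (fun k : 'I_n.+1 => (k * k <= n)%N) (fun k => nat_of_ord k)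
  (Ordinal (h : (sqrtn n).+1 < n.+1)%N) h2.
by rewrite /= -/(sqrtn n) ltnn.
Qed.

Lemma sqrt_le_double_sqrtn (R : rcfType) n : (0 < n)%N ->
  Num.sqrt (n%:R : R) <= (2 * sqrtn n)%:R.
Proof.
move=> n_gt0; have := ltn_sqrtn n; have := sqrtn_gt0 n_gt0 => s_gt0 n_lt.
rewrite -[leRHS]ger0_norm ?ler0n // -sqrtr_sqr ler_sqrt ?sqr_ge0 //.
by rewrite -natrX ler_nat; nia.
Qed.

Lemma le_density_of_sqrt (R : rcfType) (eps m k N : R) : 0 <= eps -> 0 < m ->
  eps * Num.sqrt m <= k -> Num.sqrt m <= N -> eps <= N * (k / m).
Proof.
move=> eps_ge0 m_gt0 k_ge sqrt_le.
have sqrt_ge0 := sqrtr_ge0 m; have k_ge0 : 0 <= k by apply: le_trans k_ge; rewrite mulr_ge0.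
rewrite mulrA ler_pdivlMr // -[m in leLHS](sqr_sqrtr (ltW m_gt0)) expr2 mulrA.
nra.
Qed.

(* [u] is the density |U|/n, [d] the degree ratio delta, [h] the hitting probability. *)
Lemma hit_prob_ge_of_visits (R : realFieldType) (d eps u W N h : R) :
  0 < d -> 0 < eps -> 4 * eps <= d ^+ 2 -> 2 * eps <= d -> 0 <= u ->
  eps <= N * u -> N <= 2 * W ->
  W * (u * d - eps * (u / d)) <= h * (1 + N * (u / d)) -> eps * d / 4 <= h.
Proof.
move=> d_gt0 eps_gt0 eps_sq eps_half u_ge0 eps_le N_le hit.
have eps_ud : eps * (u / d) <= u * d / 4.
  by rewrite mulrA ler_pdivrMr //; nra.
have N_ge0 : 0 <= N by nra.
have margin : 3 / 8 * (N * u) * d <= h * (1 + N * (u / d)).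
  apply: le_trans hit.
  have gap_ge : 3 / 4 * (u * d) <= u * d - eps * (u / d) by lra.
  have : 0 <= (W - N / 2) * (u * d - eps * (u / d)) by rewrite mulr_ge0 //; nra.
  have : 0 <= N * (u * d - eps * (u / d) - 3 / 4 * (u * d)) by rewrite mulr_ge0 //; lra.
  nra.
have : 3 / 8 * (N * u) * d * d <= h * (d + N * u).
  have scale : h * (1 + N * (u / d)) * d = h * (d + N * u).
    by rewrite -mulrA mulrDl mul1r -mulrA divfK ?gt_eqF.
  by rewrite -scale ler_wpM2r // ltW.
have : eps * (d + N * u) <= 3 / 2 * (N * u) * d by nra.
nra.
Qed.

Theorem claim3p3 (R : realType) (delta : R) (hdelta : 0 < delta) :
  exists2 c : R, 0 < c &
  forall (eps : R), 0 < eps -> eps < c ->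
  forall (T : finType) (e : rel T), simple_graph e ->
  eps ^-2 <= (#|T|)%:R ->
  (forall x : T, delta * (#|T|)%:R <= (deg e x)%:R) ->
  forall (U : {set T}), eps * Num.sqrt ((#|T|)%:R) <= (#|U|)%:R ->
  forall (v : T) (t : nat), is_tmix e (eps / 2) t ->
  srw_avoid_prob R e U v (2 * (t + sqrtn #|T|))
    <= 1 - eps * delta / 4.
Proof.
have denom_gt0 : 0 < 4 * (1 + delta) by rewrite mulr_gt0 //; lra.
exists (delta ^+ 2 / (4 * (1 + delta))); first by rewrite divr_gt0 ?exprn_gt0.
move=> eps eps_gt0 eps_lt T e [e_sym e_irr] n_ge deg_ge U U_ge v t [tmix _].
have [eps_sq eps_half] : 4 * eps <= delta ^+ 2 /\ 2 * eps <= delta.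
  by move: eps_lt; rewrite ltr_pdivlMr // => eps_lt; split; nra.
have n_gt0 : (0 < #|T|)%N.
  by rewrite -(ltr0n R); apply: lt_le_trans n_ge; rewrite invr_gt0 exprn_gt0.
have deg_gt0 := deg_gt0 hdelta deg_ge.
have mix x : \sum_y `|lazy_dist R e t x y - stat R e y| <= eps.
  have [s s_le tv_lt] := tmix x.
  by move: (le_lt_trans (tv_to_stat_le R e_sym deg_gt0 x s_le) tv_lt); rewrite /tv_to_stat; lra.
set s := sqrtn #|T|; set N := (2 * (t + s))%N.
have hit := srw_hit_ge e_sym e_irr hdelta deg_ge U (t + 2 * s) v mix.
rewrite (_ : (t + 2 * s + t = N)%N) in hit; last by rewrite /N; lia.
have [avoid_ge0 _] := andP (avoid_ge0_le1 (srw_ge0 R e) (srw_sum1 R deg_gt0) U N v).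
rewrite srw_avoid_probE; apply: le_trans (_ : avoid (srw R e) U N v <= _).
  by case: (v \notin U); rewrite ?mul1r ?mul0r.
suff : eps * delta / 4 <= 1 - avoid (srw R e) U N v by lra.
apply: hit_prob_ge_of_visits hit => //; first by rewrite divr_ge0 ?ler0n.
  apply: le_density_of_sqrt (ltW eps_gt0) _ U_ge _; first by rewrite ltr0n.
  by apply: le_trans (sqrt_le_double_sqrtn R n_gt0) _; rewrite ler_nat /N; lia.
by rewrite -natrM ler_nat /N; lia.
Qed.
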